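(* Let $\alpha\in[0,1)$ and $0<a<b<1$. There exists $\mu(\alpha,a,b)>0$ such that $\int_a^b\tilde\Phi_{\alpha,m}(x)^2\,dx\ge\mu(\alpha,a,b)$ for all $m\ge1$.
   Context: Let $\nu_\alpha=\frac{1-\alpha}{2-\alpha}$, $\kappa_\alpha=\frac{2-\alpha}2$. For real $\mu$, $J_\mu$ is the Bessel function of the first kind of order $\mu$ and $0<j_{\mu,1}<j_{\mu,2}<\cdots$ its positive zeros. Let $\Phi^{(o)}_{\alpha,n}$ be the odd function on $(-1,1)$ equal to $x^{\frac{1-\alpha}2}J_{\nu_\alpha}(j_{\nu_\alpha,n}x^{\kappa_\alpha})$ for $x\in(0,1)$, and $\Phi^{(e)}_{\alpha,n}$ the even function equal to $|x|^{\frac{1-\alpha}2}J_{-\nu_\alpha}(j_{-\nu_\alpha,n}|x|^{\kappa_\alpha})$ for $x\ne0$. Define for $n\ge1$: $\tilde\Phi_{\alpha,2n-1}=\frac{\sqrt{\kappa_\alpha}}{|J'_{-\nu_\alpha}(j_{-\nu_\alpha,n})|}\Phi^{(e)}_{\alpha,n}$ and $\tilde\Phi_{\alpha,2n}=\frac{\sqrt{\kappa_\alpha}}{|J'_{\nu_\alpha}(j_{\nu_\alpha,n})|}\Phi^{(o)}_{\alpha,n}$. *)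

From Stdlib Require Import Reals Lra ClassicalEpsilon List.
From Coquelicot Require Import Coquelicot.
Open Scope R_scope.

Definition Gamma (s : R) : R :=
  RInt_gen (fun t => Rpower t (s - 1) * exp (- t)) (at_right 0) (Rbar_locally p_infty).

Definition besselJ (mu x : R) : R :=
  Rpower (x / 2) mu *
  Series (fun k => (-1) ^ k / (INR (Factorial.fact k) * Gamma (INR k + mu + 1)) * (x / 2) ^ (2 * k)).

Definition is_nth_pos_zero (mu : R) (n : nat) (j : R) : Prop :=
  0 < j /\ besselJ mu j = 0 /\
  exists l : list R, NoDup l /\ length l = (n - 1)%nat /\
    forall x, In x l <-> (0 < x < j /\ besselJ mu x = 0).

Definition bessel_zero (mu : R) (n : nat) : R :=
  epsilon (inhabits 0) (fun j => is_nth_pos_zero mu n j).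

Definition nu_ (alpha : R) : R := (1 - alpha) / (2 - alpha).
Definition kappa_ (alpha : R) : R := (2 - alpha) / 2.

Definition Phi_o (alpha : R) (n : nat) (x : R) : R :=
  let f := fun y => Rpower y ((1 - alpha) / 2) *
                    besselJ (nu_ alpha) (bessel_zero (nu_ alpha) n * Rpower y (kappa_ alpha)) in
  if Rlt_dec 0 x then f x else if Rlt_dec x 0 then - f (- x) else 0.

(* Phi^(e)_{alpha,n}: even function, defined for x <> 0 (value 0 at x = 0, irrelevant). *)
Definition Phi_e (alpha : R) (n : nat) (x : R) : R :=
  if Req_EM_T x 0 then 0 else
  Rpower (Rabs x) ((1 - alpha) / 2) *
  besselJ (- nu_ alpha) (bessel_zero (- nu_ alpha) n * Rpower (Rabs x) (kappa_ alpha)).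

Definition tPhi (alpha : R) (m : nat) (x : R) : R :=
  if Nat.odd m then
    let n := ((m + 1) / 2)%nat in
    sqrt (kappa_ alpha) / Rabs (Derive (besselJ (- nu_ alpha)) (bessel_zero (- nu_ alpha) n))
      * Phi_e alpha n x
  else
    let n := (m / 2)%nat in
    sqrt (kappa_ alpha) / Rabs (Derive (besselJ (nu_ alpha)) (bessel_zero (nu_ alpha) n))
      * Phi_o alpha n x.

From Stdlib Require Import Reals Lra Lia Psatz ClassicalEpsilon List.
From Coquelicot Require Import Coquelicot.
Open Scope R_scope.

(* Substituting [t = j x^kappa], with [j = j_{+-nu,n}], turns [int_a^b tPhi_m^2] into
   [int_{j a^kappa}^{j b^kappa} u^2 / (j u'(j)^2)], where [u t = 2^mu sqrt t J_mu(t)] solves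
   [u'' + q u = 0] with [q t = 1 + (1/4 - mu^2) / t^2], a function that is [>= 1] and
   nonincreasing because [|mu| <= 1/2].  Hence [u'^2 + q u^2] decreases and [u'^2 / q + u^2]
   increases, so on [[j a^kappa, j b^kappa]] (where [q <= 2] once [j a^kappa >= 1/2]) both
   [u^2] and [u'^2] are bounded by multiples of [u'(j)^2] while [u'^2 + q u^2 >= u'(j)^2].
   Integrating [(u u')' = u'^2 - q u^2] then yields
   [int u^2 >= j (b^kappa - a^kappa) u'(j)^2 / 8] for [j] large.  The zeros of [u] are simple
   and uniformly separated, so [j_{+-nu,n}] tends to infinity, and each of the finitely many
   remaining [m] gives a positive integral. *)

Lemma is_derive_Rpower (t y : R) :
  0 < t -> is_derive (fun x => Rpower x y) t (y * Rpower t (y - 1)).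
Proof. intros Ht; apply is_derive_Reals, derivable_pt_lim_power, Ht. Qed.

Lemma continuous_Rpower (t y : R) : 0 < t -> continuous (fun x => Rpower x y) t.
Proof.
  intros Ht; apply (ex_derive_continuous (fun x => Rpower x y)).
  eexists; apply is_derive_Rpower, Ht.
Qed.

Lemma exp_le_compat (x y : R) : x <= y -> exp x <= exp y.
Proof. intros [H | <-]; [left; apply exp_increasing, H | right; reflexivity]. Qed.

(* [auto_derive] keeps the functions it does not know opaque; their derivatives
   are then read off the [is_derive] hypotheses of the context. *)
Ltac derive_using_hyps :=
  auto_derive;
  [ repeat split; try (eexists; eassumption)
  | repeat match goal with
      |- context [Derive ?g ?x] =>
        match goal with
          H : is_derive _ _ ?l |- _ =>
            replace (Derive g x) with l by (symmetry; apply is_derive_unique; exact H)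
        end
    end ].

Ltac continuity_using_hyps :=
  match goal with
    |- continuous ?f ?x =>
      apply (ex_derive_continuous f); auto_derive; repeat split; try (eexists; eassumption)
  end.

(* Coquelicot's integral lemmas, restated with [Rplus] and [Rmult] in place of the generic
   [plus] and [scal] so that they rewrite real-valued goals. *)
Lemma RInt_Chasles_R (f : R -> R) (a b c : R) :
  ex_RInt f a b -> ex_RInt f b c -> RInt f a b + RInt f b c = RInt f a c.
Proof. exact (RInt_Chasles f a b c). Qed.

Lemma RInt_swap_R (f : R -> R) (a b : R) : ex_RInt f a b -> RInt f b a = - RInt f a b.
Proof. intros H; symmetry; exact (opp_RInt_swap f a b H). Qed.

Lemma RInt_ext_R (f g : R -> R) (a b : R) :
  (forall x, Rmin a b < x < Rmax a b -> f x = g x) -> RInt f a b = RInt g a b.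
Proof. exact (RInt_ext f g a b). Qed.

Lemma RInt_plus_R (f g : R -> R) (a b : R) : ex_RInt f a b -> ex_RInt g a b ->
  RInt (fun x => f x + g x) a b = RInt f a b + RInt g a b.
Proof. exact (RInt_plus f g a b). Qed.

Lemma RInt_scal_R (f : R -> R) (k a b : R) : ex_RInt f a b ->
  RInt (fun x => k * f x) a b = k * RInt f a b.
Proof. exact (RInt_scal f a b k). Qed.

Lemma MVT_is_derive (f df : R -> R) (a b : R) :
  (forall t, Rmin a b <= t <= Rmax a b -> is_derive f t (df t)) ->
  exists c, Rmin a b <= c <= Rmax a b /\ f b - f a = df c * (b - a).
Proof.
  intros Hf; apply MVT_gen; [intros t Ht; apply Hf; lra |].
  intros t Ht; apply continuity_pt_filterlim, (ex_derive_continuous f); eexists; apply Hf, Ht.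
Qed.

Lemma le_of_derive_nonneg (f df : R -> R) (a b : R) : a <= b ->
  (forall t, a <= t <= b -> is_derive f t (df t)) ->
  (forall t, a <= t <= b -> 0 <= df t) -> f a <= f b.
Proof.
  intros Hab Hf Hdf.
  destruct (MVT_is_derive f df a b) as [c [Hc E]]; rewrite ?Rmin_left, ?Rmax_right in * by lra.
  - exact Hf.
  - pose proof (Hdf c Hc); nra.
Qed.

Lemma le_of_derive_nonpos (f df : R -> R) (a b : R) : a <= b ->
  (forall t, a <= t <= b -> is_derive f t (df t)) ->
  (forall t, a <= t <= b -> df t <= 0) -> f b <= f a.
Proof.
  intros Hab Hf Hdf.
  enough (- f a <= - f b) by lra.
  apply (le_of_derive_nonneg (fun t => - f t) (fun t => - df t)); [lra | |].
  - intros t Ht; pose proof (Hf t Ht); derive_using_hyps; ring.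
  - intros t Ht; specialize (Hdf t Ht); lra.
Qed.

Lemma RInt_gt_0 (f : R -> R) (a b c : R) : a < b ->
  (forall x, a <= x <= b -> continuous f x) -> (forall x, a <= x <= b -> 0 <= f x) ->
  a <= c <= b -> 0 < f c -> 0 < RInt f a b.
Proof.
  intros Hab Hcont Hpos Hc Hfc.
  assert (Hex : forall u v, a <= u <= b -> a <= v <= b -> ex_RInt f u v).
  { intros u v Hu Hv; apply (ex_RInt_continuous f); intros x Hx; apply Hcont.
    split; [apply Rle_trans with (Rmin u v) | apply Rle_trans with (Rmax u v)];
      unfold Rmin, Rmax in *; destruct Rle_dec; lra. }
  assert (Hfc2 : 0 < f c / 2) by lra.
  destruct (proj1 (filterlim_locally f (f c)) (Hcont c Hc) (mkposreal _ Hfc2)) as [d Hd].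
  set (c1 := Rmax a (c - d / 2)); set (c2 := Rmin b (c + d / 2)).
  pose proof (cond_pos d).
  assert (Hc12 : a <= c1 /\ c1 < c2 /\ c2 <= b)
    by (unfold c1, c2, Rmax, Rmin; destruct Rle_dec; destruct Rle_dec; lra).
  assert (Hmid : (c2 - c1) * (f c / 2) <= RInt f c1 c2).
  { rewrite <- (RInt_const (V := R_CompleteNormedModule)).
    apply RInt_le; [lra | apply ex_RInt_const | apply Hex; lra |].
    intros x Hx.
    assert (Hball : ball c d x).
    { change (Rabs (x - c) < d); apply Rabs_lt_between.
      unfold c1, c2, Rmax, Rmin in *; destruct Rle_dec; destruct Rle_dec; lra. }
    specialize (Hd x Hball); change (Rabs (f x - f c) < f c / 2) in Hd.
    apply Rabs_lt_between in Hd; simpl; lra. }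
  assert (0 <= RInt f a c1)
    by (apply RInt_ge_0; [lra | apply Hex; lra | intros; apply Hpos; lra]).
  assert (0 <= RInt f c2 b)
    by (apply RInt_ge_0; [lra | apply Hex; lra | intros; apply Hpos; lra]).
  rewrite <- (RInt_Chasles_R f a c1 b), <- (RInt_Chasles_R f c1 c2 b) by (apply Hex; lra).
  assert (0 < (c2 - c1) * (f c / 2)) by (apply Rmult_lt_0_compat; lra).
  lra.
Qed.

Lemma continuous_nonzero_same_sign (f : R -> R) (a b : R) :
  (forall t, a <= t <= b -> continuous f t) -> (forall t, a <= t <= b -> f t <> 0) ->
  forall t, a <= t <= b -> 0 < f a * f t.
Proof.
  intros Hcont Hnz t Ht.
  assert (Ha : f a <> 0) by (apply Hnz; lra).
  assert (Hat : f a * f t <> 0) by (apply Rmult_integral_contrapositive_currified; auto).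
  destruct (Rlt_dec 0 (f a * f t)) as [|Hneg]; [assumption | exfalso].
  assert (Hlt : a < t).
  { destruct (Req_dec a t) as [<- | ]; [| lra].
    pose proof (Rsqr_pos_lt _ Ha); unfold Rsqr in *; lra. }
  destruct (Ranalysis5.IVT_interv (fun x => - (f a * f x)) a t) as [z [Hz Hfz]].
  - intros x Hx; apply continuity_pt_filterlim.
    apply (continuous_opp (V := R_NormedModule) (fun x => f a * f x)).
    apply (continuous_scal_r (K := R_AbsRing) (f a) f), Hcont; lra.
  - assumption.
  - pose proof (Rsqr_pos_lt _ Ha); unfold Rsqr in *; lra.
  - lra.
  - apply (Hnz z); [lra|]. apply (Rmult_eq_reg_l (f a)); lra.
Qed.

Lemma filterlim_Rpower_at_right_0 (s : R) : 0 < s ->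
  filterlim (fun t => Rpower t s) (at_right 0) (locally 0).
Proof.
  intros Hs; unfold Rpower.
  apply (filterlim_comp _ _ _ (fun t => s * ln t) exp _ (Rbar_locally m_infty));
    [| exact is_lim_exp_m].
  apply (filterlim_comp _ _ _ ln (fun y => s * y) _ (Rbar_locally m_infty));
    [exact is_lim_ln_0 |].
  intros P [M HM]; exists (M / s); intros y Hy; apply HM.
  apply (Rmult_lt_compat_l s) in Hy; [| lra].
  replace (s * (M / s)) with M in Hy by (field; lra); lra.
Qed.

Lemma filterlim_exp_half_p_infty (C : R) :
  filterlim (fun t => C * exp (- t / 2)) (Rbar_locally p_infty) (locally 0).
Proof.
  rewrite <- (Rmult_0_r C).
  apply (filterlim_comp _ _ _ (fun t => exp (- t / 2)) (Rmult C) _ (locally 0));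
    [| exact (filterlim_Rbar_mult_l C 0)].
  apply (filterlim_comp _ _ _ (fun t => - t / 2) exp _ (Rbar_locally m_infty));
    [| exact is_lim_exp_m].
  intros P [M HM]; exists (- 2 * M); intros y Hy; apply HM; lra.
Qed.

Lemma list_max_exists (l : list R) : l <> nil -> exists m, In m l /\ forall x, In x l -> x <= m.
Proof.
  induction l as [| a l IH]; intros Hl; [congruence |].
  destruct l as [| b l].
  - exists a; split; [left; reflexivity | intros x [<- | []]; lra].
  - destruct IH as [m [Hm Hmax]]; [discriminate |].
    exists (Rmax a m); split.
    + unfold Rmax; destruct Rle_dec; [right | left]; auto.
    + intros x [<- | Hx]; [apply Rmax_l | eapply Rle_trans; [apply Hmax, Hx | apply Rmax_r]].
Qed.

Lemma separated_points_count (d x0 T : R) (l : list R) : 0 < d -> l <> nil -> NoDup l ->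
  (forall x, In x l -> x0 <= x <= T) ->
  (forall x y, In x l -> In y l -> x < y -> d <= y - x) ->
  (INR (length l) - 1) * d <= T - x0.
Proof.
  intros Hd; remember (length l) as n eqn:Hn; revert l T Hn.
  induction n as [| n IH]; intros l T Hn Hl Hnd Hrange Hsep;
    [destruct l; [congruence | discriminate] |].
  destruct (list_max_exists l Hl) as [m [Hm Hmax]].
  destruct (in_split m l Hm) as [l1 [l2 ->]].
  pose proof (Hrange m Hm) as Hmr.
  assert (Hsub : forall x, In x (l1 ++ l2) -> In x (l1 ++ m :: l2)).
  { intros x Hx; apply in_app_or in Hx; apply in_or_app; simpl; tauto. }
  assert (Hlen : length (l1 ++ l2) = n) by (rewrite length_app in *; simpl in Hn; lia).
  destruct n as [| n]; [simpl; rewrite Rminus_diag, Rmult_0_l; lra |].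
  assert (Hbelow : forall x, In x (l1 ++ l2) -> x0 <= x <= m - d).
  { intros x Hx; pose proof (Hrange x (Hsub x Hx)); pose proof (Hmax x (Hsub x Hx)).
    assert (x <> m) by (intros ->; apply (NoDup_remove_2 _ _ _ Hnd), Hx).
    pose proof (Hsep x m (Hsub x Hx) Hm ltac:(lra)); lra. }
  assert (Hl' : l1 ++ l2 <> nil) by (intros E; rewrite E in Hlen; discriminate).
  pose proof (IH (l1 ++ l2) (m - d) (eq_sym Hlen) Hl' (NoDup_remove_1 _ _ _ Hnd) Hbelow
                (fun x y Hx Hy => Hsep x y (Hsub x Hx) (Hsub y Hy))).
  rewrite (S_INR (S n)); lra.
Qed.

(** * Improper integrals and the Gamma function *)

Lemma filter_prod_at_right_0_p_infty (P : R -> R -> Prop) (d M : R) : 0 < d ->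
  (forall x y, 0 < x < d -> M < y -> P x y) ->
  filter_prod (at_right 0) (Rbar_locally p_infty) (fun ab => P (fst ab) (snd ab)).
Proof.
  intros Hd HP.
  apply (Filter_prod _ _ _ (fun x => 0 < x < d) (fun y => M < y)); [| exists M; auto | auto].
  exists (mkposreal d Hd); intros x Hx Hx0.
  change (Rabs (x - 0) < d) in Hx; apply Rabs_lt_between in Hx; simpl in Hx; lra.
Qed.

Lemma is_RInt_gen_of_filterlim_RInt (f : R -> R) (Fa Fb : (R -> Prop) -> Prop)
  {FFa : Filter Fa} {FFb : Filter Fb} (l : R) :
  filter_prod Fa Fb (fun ab => ex_RInt f (fst ab) (snd ab)) ->
  filterlim (fun ab => RInt f (fst ab) (snd ab)) (filter_prod Fa Fb) (locally l) ->
  is_RInt_gen f Fa Fb l.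
Proof.
  intros Hex Hlim P HP; specialize (Hlim P HP); unfold filtermap in Hlim; unfold filtermapi.
  generalize (filter_and _ _ Hex Hlim); apply filter_imp.
  intros ab [Hab HPab]; exists (RInt f (fst ab) (snd ab)).
  split; [exact (RInt_correct f _ _ Hab) | exact HPab].
Qed.

Lemma filterlim_RInt_of_is_RInt_gen (f : R -> R) (Fa Fb : (R -> Prop) -> Prop)
  {FFa : Filter Fa} {FFb : Filter Fb} (l : R) :
  is_RInt_gen f Fa Fb l ->
  filterlim (fun ab => RInt f (fst ab) (snd ab)) (filter_prod Fa Fb) (locally l).
Proof.
  intros H P HP; specialize (H P HP); unfold filtermapi in H; unfold filtermap.
  revert H; apply filter_imp; intros ab [y [Hy HPy]].
  rewrite (is_RInt_unique f _ _ y Hy); exact HPy.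
Qed.

Lemma filterlim_at_right_0_lt (phi : R -> R) (eps : R) :
  filterlim phi (at_right 0) (locally 0) -> 0 < eps ->
  exists d, 0 < d /\ forall x, 0 < x < d -> phi x < eps.
Proof.
  intros Lphi He; destruct (proj1 (filterlim_locally phi 0) Lphi (mkposreal _ He)) as [d Hd].
  exists d; split; [apply cond_pos | intros x Hx].
  assert (Hb : ball 0 d x) by (change (Rabs (x - 0) < d); rewrite Rminus_0_r, Rabs_right; lra).
  specialize (Hd x Hb ltac:(lra)); change (Rabs (phi x - 0) < eps) in Hd.
  apply Rabs_lt_between in Hd; lra.
Qed.

Lemma filterlim_p_infty_lt (psi : R -> R) (eps : R) :
  filterlim psi (Rbar_locally p_infty) (locally 0) -> 0 < eps ->
  exists M, forall x, M < x -> psi x < eps.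
Proof.
  intros Lpsi He; destruct (proj1 (filterlim_locally psi 0) Lpsi (mkposreal _ He)) as [M HM].
  exists M; intros x Hx; specialize (HM x Hx); change (Rabs (psi x - 0) < eps) in HM.
  apply Rabs_lt_between in HM; lra.
Qed.

Lemma ex_RInt_gen_at_right_0_p_infty (f phi psi : R -> R) :
  (forall u v, 0 < u -> 0 < v -> ex_RInt f u v) ->
  (forall u v, 0 < u <= v -> Rabs (RInt f u v) <= phi v) ->
  (forall u v, 1 <= u <= v -> Rabs (RInt f u v) <= psi u) ->
  filterlim phi (at_right 0) (locally 0) ->
  filterlim psi (Rbar_locally p_infty) (locally 0) ->
  ex_RInt_gen f (at_right 0) (Rbar_locally p_infty).
Proof.
  intros Hex Hphi Hpsi Lphi Lpsi.
  assert (Near : forall x y, 0 < x -> 0 < y -> Rabs (RInt f x y) <= phi (Rmax x y)).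
  { intros x y Hx Hy; destruct (Rle_dec x y).
    - rewrite Rmax_right by lra; apply Hphi; lra.
    - rewrite RInt_swap_R, Rabs_Ropp, Rmax_left by (try apply Hex; lra); apply Hphi; lra. }
  assert (Far : forall x y, 1 <= x -> 1 <= y -> Rabs (RInt f x y) <= psi (Rmin x y)).
  { intros x y Hx Hy; destruct (Rle_dec x y).
    - rewrite Rmin_left by lra; apply Hpsi; lra.
    - rewrite RInt_swap_R, Rabs_Ropp, Rmin_right by (try apply Hex; lra); apply Hpsi; lra. }
  assert (FP : ProperFilter (filter_prod (at_right 0) (Rbar_locally p_infty))).
  { apply filter_prod_proper. }
  destruct (proj1 (filterlim_locally_cauchy (F := filter_prod (at_right 0) (Rbar_locally p_infty))
    (fun ab => RInt f (fst ab) (snd ab)))) as [l Hl].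
  - intros eps.
    assert (He2 : 0 < eps / 2) by (pose proof (cond_pos eps); lra).
    destruct (filterlim_at_right_0_lt phi (eps / 2) Lphi He2) as [d [Hd Smallphi]].
    destruct (filterlim_p_infty_lt psi (eps / 2) Lpsi He2) as [M Smallpsi].
    exists (fun ab => 0 < fst ab < d /\ Rmax 1 M < snd ab); split.
    + apply (filter_prod_at_right_0_p_infty (fun x y => 0 < x < d /\ Rmax 1 M < y) d (Rmax 1 M));
        auto.
    + intros [u1 u2] [v1 v2] [Hu1 Hu2] [Hv1 Hv2]; simpl in *.
      pose proof (Rmax_l 1 M); pose proof (Rmax_r 1 M).
      change (Rabs (RInt f v1 v2 - RInt f u1 u2) < eps).
      rewrite <- (RInt_Chasles_R f v1 u1 v2), <- (RInt_Chasles_R f u1 u2 v2) by (apply Hex; lra).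
      replace (RInt f v1 u1 + (RInt f u1 u2 + RInt f u2 v2) - RInt f u1 u2)
        with (RInt f v1 u1 + RInt f u2 v2) by ring.
      eapply Rle_lt_trans; [apply Rabs_triang |].
      pose proof (Near v1 u1 ltac:(lra) ltac:(lra)); pose proof (Far u2 v2 ltac:(lra) ltac:(lra)).
      pose proof (Smallphi (Rmax v1 u1) ltac:(unfold Rmax; destruct Rle_dec; lra)).
      pose proof (Smallpsi (Rmin u2 v2) ltac:(unfold Rmin; destruct Rle_dec; lra)).
      lra.
  - exists l; apply (is_RInt_gen_of_filterlim_RInt f _ _ l); [| exact Hl].
    apply (filter_prod_at_right_0_p_infty (fun x y => ex_RInt f x y) 1 0); [lra |].
    intros x y Hx Hy; apply Hex; lra.
Qed.

Definition gamma_integrand (s t : R) : R := Rpower t (s - 1) * exp (- t).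

Lemma gamma_integrand_pos (s t : R) : 0 < gamma_integrand s t.
Proof. apply Rmult_lt_0_compat; apply exp_pos. Qed.

Lemma continuous_gamma_integrand (s t : R) : 0 < t -> continuous (gamma_integrand s) t.
Proof.
  intros Ht; apply (ex_derive_continuous (gamma_integrand s)); unfold gamma_integrand.
  auto_derive; repeat split; eexists; apply is_derive_Rpower, Ht.
Qed.

Lemma ex_RInt_gamma_integrand (s u v : R) : 0 < u -> 0 < v -> ex_RInt (gamma_integrand s) u v.
Proof.
  intros Hu Hv; apply (ex_RInt_continuous (gamma_integrand s)); intros t Ht.
  apply continuous_gamma_integrand.
  apply Rlt_le_trans with (Rmin u v); [apply Rmin_glb_lt |]; lra.
Qed.

(* From [ln t < 2 sqrt t] and [2 (s - 1) sqrt t <= 2 (s - 1)^2 + t / 2]. *)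
Lemma gamma_integrand_le_exp (s t : R) : 1 <= t ->
  gamma_integrand s t <= exp (2 * (s - 1) ^ 2) * exp (- t / 2).
Proof.
  intros Ht; unfold gamma_integrand, Rpower; rewrite <- !exp_plus.
  apply exp_le_compat.
  assert (Hln0 : 0 <= ln t) by (rewrite <- ln_1; apply ln_le; lra).
  assert (Hr : 0 < sqrt t) by (apply sqrt_lt_R0; lra).
  assert (Hrr : sqrt t * sqrt t = t) by (apply sqrt_sqrt; lra).
  assert (Hln : ln t < 2 * sqrt t).
  { rewrite <- Hrr at 1; rewrite ln_mult by lra.
    assert (ln (sqrt t) <= sqrt t - 1).
    { pose proof (exp_ineq1_le (sqrt t - 1)).
      rewrite <- (ln_exp (sqrt t - 1)); apply ln_le; lra. }
    lra. }
  destruct (Rle_dec 0 (s - 1)).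
  - assert ((s - 1) * ln t <= (s - 1) * (2 * sqrt t)) by (apply Rmult_le_compat_l; lra).
    assert (0 <= (s - 1 - sqrt t / 2) ^ 2) by apply pow2_ge_0.
    rewrite <- Hrr at 2 3; nra.
  - assert ((s - 1) * ln t <= 0) by nra.
    assert (0 <= (s - 1) ^ 2) by apply pow2_ge_0; lra.
Qed.

Lemma RInt_gamma_integrand_near_0 (s u v : R) : 0 < s -> 0 < u <= v ->
  Rabs (RInt (gamma_integrand s) u v) <= Rpower v s / s.
Proof.
  intros Hs Huv.
  assert (Hpow : is_RInt (fun t => Rpower t (s - 1)) u v (Rpower v s / s - Rpower u s / s)).
  { apply (is_RInt_derive (fun t => Rpower t s / s)).
    - intros t Ht; rewrite Rmin_left in Ht by lra.
      pose proof (is_derive_Rpower t s ltac:(lra)); derive_using_hyps; field; lra.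
    - intros t Ht; rewrite Rmin_left in Ht by lra; apply continuous_Rpower; lra. }
  assert (HI : 0 <= RInt (gamma_integrand s) u v).
  { apply RInt_ge_0; [lra | apply ex_RInt_gamma_integrand; lra |].
    intros; left; apply gamma_integrand_pos. }
  rewrite Rabs_right by lra.
  apply Rle_trans with (Rpower v s / s - Rpower u s / s).
  - apply (is_RInt_le (gamma_integrand s) (fun t => Rpower t (s - 1)) u v); [lra | | exact Hpow |].
    + apply (RInt_correct (gamma_integrand s)), ex_RInt_gamma_integrand; lra.
    + intros t Ht; unfold gamma_integrand.
      assert (0 < Rpower t (s - 1)) by apply exp_pos.
      assert (exp (- t) <= 1) by (rewrite <- exp_0; apply exp_le_compat; lra).
      nra.
  - assert (0 < Rpower u s / s) by (apply Rdiv_lt_0_compat; [apply exp_pos | lra]); nra.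
Qed.

Lemma RInt_gamma_integrand_tail (s u v : R) : 1 <= u <= v ->
  Rabs (RInt (gamma_integrand s) u v) <= 2 * exp (2 * (s - 1) ^ 2) * exp (- u / 2).
Proof.
  intros Huv; set (C := exp (2 * (s - 1) ^ 2)).
  assert (HC : 0 < C) by apply exp_pos.
  assert (Hexp : is_RInt (fun t => C * exp (- t / 2)) u v
                   (- 2 * C * exp (- v / 2) - - 2 * C * exp (- u / 2))).
  { apply (is_RInt_derive (fun t => - 2 * C * exp (- t / 2))).
    - intros t Ht; auto_derive; [trivial | unfold Rdiv; field].
    - intros t Ht; apply (ex_derive_continuous (fun t => C * exp (- t / 2))).
      auto_derive; trivial. }
  assert (HI : 0 <= RInt (gamma_integrand s) u v).
  { apply RInt_ge_0; [lra | apply ex_RInt_gamma_integrand; lra |].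
    intros; left; apply gamma_integrand_pos. }
  rewrite Rabs_right by lra.
  apply Rle_trans with (- 2 * C * exp (- v / 2) - - 2 * C * exp (- u / 2)).
  - apply (is_RInt_le (gamma_integrand s) (fun t => C * exp (- t / 2)) u v);
      [lra | | exact Hexp |].
    + apply (RInt_correct (gamma_integrand s)), ex_RInt_gamma_integrand; lra.
    + intros t Ht; apply gamma_integrand_le_exp; lra.
  - assert (0 < C * exp (- v / 2)) by (apply Rmult_lt_0_compat; [lra | apply exp_pos]); lra.
Qed.

Lemma is_RInt_gen_Gamma (s : R) : 0 < s ->
  is_RInt_gen (gamma_integrand s) (at_right 0) (Rbar_locally p_infty) (Gamma s).
Proof.
  intros Hs; apply (RInt_gen_correct (gamma_integrand s)).
  apply (ex_RInt_gen_at_right_0_p_infty _ (fun v => Rpower v s / s)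
           (fun u => 2 * exp (2 * (s - 1) ^ 2) * exp (- u / 2))).
  - apply ex_RInt_gamma_integrand.
  - intros u v Huv; apply RInt_gamma_integrand_near_0; assumption.
  - apply RInt_gamma_integrand_tail.
  - apply (filterlim_comp _ _ _ (fun v => Rpower v s) (fun x => x * / s) _ (locally 0));
      [apply filterlim_Rpower_at_right_0, Hs |].
    rewrite <- (Rmult_0_l (/ s)) at 2; exact (filterlim_Rbar_mult_r (/ s) 0).
  - apply filterlim_exp_half_p_infty.
Qed.

Lemma Gamma_pos (s : R) : 0 < s -> 0 < Gamma s.
Proof.
  intros Hs; set (g := gamma_integrand s).
  assert (Hg : forall x, 0 <= g x) by (intros; left; apply gamma_integrand_pos).
  assert (H12 : 0 < RInt g 1 2).
  { apply (RInt_gt_0 g 1 2 1); [lra | | | lra | apply gamma_integrand_pos].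
    - intros; apply continuous_gamma_integrand; lra.
    - intros; apply Hg. }
  apply Rlt_le_trans with (RInt g 1 2); [exact H12 |].
  change (Rbar_le (RInt g 1 2) (Gamma s)).
  apply (filterlim_le (F := filter_prod (at_right 0) (Rbar_locally p_infty))
           (fun _ => RInt g 1 2) (fun ab => RInt g (fst ab) (snd ab))).
  - apply (filter_prod_at_right_0_p_infty (fun x y => RInt g 1 2 <= RInt g x y) 1 2); [lra |].
    intros x y Hx Hy.
    rewrite <- (RInt_Chasles_R g x 1 y), <- (RInt_Chasles_R g 1 2 y)
      by (apply ex_RInt_gamma_integrand; lra).
    assert (0 <= RInt g x 1)
      by (apply RInt_ge_0; [lra | apply ex_RInt_gamma_integrand; lra | auto]).
    assert (0 <= RInt g 2 y)
      by (apply RInt_ge_0; [lra | apply ex_RInt_gamma_integrand; lra | auto]).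
    lra.
  - apply filterlim_const.
  - apply (filterlim_RInt_of_is_RInt_gen g (at_right 0) (Rbar_locally p_infty)).
    apply is_RInt_gen_Gamma, Hs.
Qed.

Lemma is_derive_gamma_integrand_succ (s t : R) : 0 < t ->
  is_derive (gamma_integrand (s + 1)) t (s * gamma_integrand s t - gamma_integrand (s + 1) t).
Proof.
  intros Ht; pose proof (is_derive_Rpower t (s + 1 - 1) Ht); unfold gamma_integrand.
  derive_using_hyps; replace (s + 1 - 1) with s by ring; ring.
Qed.

Lemma filterlim_gamma_integrand_at_right_0 (s : R) : 1 < s ->
  filterlim (gamma_integrand s) (at_right 0) (locally 0).
Proof.
  intros Hs.
  apply (filterlim_le_le (fun _ => 0) _ (fun t => Rpower t (s - 1)) 0);
    [| apply filterlim_const | apply filterlim_Rpower_at_right_0; lra].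
  exists (mkposreal 1 Rlt_0_1); intros t Ht Ht0; split; [left; apply gamma_integrand_pos |].
  assert (exp (- t) <= 1) by (rewrite <- exp_0; apply exp_le_compat; lra).
  assert (0 < Rpower t (s - 1)) by apply exp_pos.
  unfold gamma_integrand; nra.
Qed.

Lemma filterlim_gamma_integrand_p_infty (s : R) :
  filterlim (gamma_integrand s) (Rbar_locally p_infty) (locally 0).
Proof.
  apply (filterlim_le_le (fun _ => 0) _ (fun t => exp (2 * (s - 1) ^ 2) * exp (- t / 2)) 0);
    [| apply filterlim_const | apply filterlim_exp_half_p_infty].
  exists 1; intros t Ht; split; [left; apply gamma_integrand_pos |].
  apply gamma_integrand_le_exp; lra.
Qed.

Lemma filter_prod_at_right_0_p_infty_forall (P : R -> Prop) : (forall x, 0 < x -> P x) ->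
  filter_prod (at_right 0) (Rbar_locally p_infty)
    (fun ab => forall x, Rmin (fst ab) (snd ab) <= x <= Rmax (fst ab) (snd ab) -> P x).
Proof.
  intros HP; apply (filter_prod_at_right_0_p_infty
    (fun a b => forall x, Rmin a b <= x <= Rmax a b -> P x) 1 1); [lra |].
  intros a b Ha Hb x Hx; apply HP.
  apply Rlt_le_trans with (Rmin a b); [apply Rmin_glb_lt |]; lra.
Qed.

(* Integration by parts against [gamma_integrand (s + 1)], which vanishes at both ends. *)
Lemma Gamma_succ (s : R) : 0 < s -> Gamma (s + 1) = s * Gamma s.
Proof.
  intros Hs; set (h := gamma_integrand (s + 1)).
  set (dh := fun t => s * gamma_integrand s t - gamma_integrand (s + 1) t).
  assert (Dh : forall t, 0 < t -> Derive h t = dh t)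
    by (intros t Ht; apply is_derive_unique, is_derive_gamma_integrand_succ, Ht).
  assert (Cont : forall x, 0 < x -> continuous (Derive h) x).
  { intros x Hx; apply (continuous_ext_loc _ dh).
    - exists (mkposreal x Hx); intros y Hy.
      change (Rabs (y - x) < x) in Hy; apply Rabs_lt_between in Hy.
      symmetry; apply Dh; lra.
    - apply (continuous_minus (V := R_NormedModule)); [| apply continuous_gamma_integrand, Hx].
      apply (continuous_scal_r (K := R_AbsRing) s (gamma_integrand s)).
      apply continuous_gamma_integrand, Hx. }
  assert (Hparts := is_RInt_gen_Derive h 0 0
    (filter_prod_at_right_0_p_infty_forall _
       (fun x Hx => ex_intro _ _ (is_derive_gamma_integrand_succ s x Hx)))
    (filter_prod_at_right_0_p_infty_forall _ Cont)
    (filterlim_gamma_integrand_at_right_0 (s + 1) ltac:(lra))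
    (filterlim_gamma_integrand_p_infty (s + 1))).
  assert (Hcomb := is_RInt_gen_minus _ _ _ _
    (is_RInt_gen_scal _ s _ (is_RInt_gen_Gamma s Hs)) Hparts).
  apply (is_RInt_gen_ext _ (gamma_integrand (s + 1))) in Hcomb.
  - change (RInt_gen (gamma_integrand (s + 1)) (at_right 0) (Rbar_locally p_infty) = s * Gamma s).
    rewrite (is_RInt_gen_unique _ _ Hcomb).
    change (s * Gamma s - (0 - 0) = s * Gamma s); ring.
  - assert (Heq : forall y, 0 < y ->
              minus (scal s (gamma_integrand s y)) (Derive h y) = gamma_integrand (s + 1) y).
    { intros y Hy; rewrite (Dh y Hy).
      change (s * gamma_integrand s y - dh y = gamma_integrand (s + 1) y); unfold dh; ring. }
    generalize (filter_prod_at_right_0_p_infty_forall _ Heq).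
    apply filter_imp; intros ab Hab x Hx; apply Hab; lra.
Qed.

Definition bessel_coef (mu : R) (k : nat) : R :=
  (-1) ^ k / (INR (Factorial.fact k) * Gamma (INR k + mu + 1)).

Lemma bessel_coef_neq_0 (mu : R) (k : nat) : -1 < mu -> bessel_coef mu k <> 0.
Proof.
  intros Hmu; unfold bessel_coef.
  assert (0 < Gamma (INR k + mu + 1)) by (apply Gamma_pos; pose proof (pos_INR k); lra).
  pose proof (INR_fact_lt_0 k).
  apply Rmult_integral_contrapositive_currified; [apply pow_nonzero; lra |].
  apply Rinv_neq_0_compat, Rmult_integral_contrapositive_currified; lra.
Qed.

Lemma bessel_coef_succ (mu : R) (k : nat) : -1 < mu ->
  bessel_coef mu (S k) * ((INR k + 1) * (INR k + 1 + mu)) = - bessel_coef mu k.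
Proof.
  intros Hmu; unfold bessel_coef; rewrite S_INR.
  replace (INR k + 1 + mu + 1) with ((INR k + mu + 1) + 1) by ring.
  rewrite Gamma_succ by (pose proof (pos_INR k); lra).
  rewrite fact_simpl, mult_INR, S_INR; simpl pow.
  assert (0 < Gamma (INR k + mu + 1)) by (apply Gamma_pos; pose proof (pos_INR k); lra).
  pose proof (INR_fact_lt_0 k); pose proof (pos_INR k).
  field; repeat split; lra.
Qed.

Lemma CV_radius_bessel_coef (mu : R) : -1 < mu -> CV_radius (bessel_coef mu) = p_infty.
Proof.
  intros Hmu; apply CV_radius_infinite_DAlembert; [intros; apply bessel_coef_neq_0, Hmu |].
  apply is_lim_seq_le_le with (fun _ => 0) (fun n => / (1 + mu) * / INR (S n)).
  - intros n; pose proof (bessel_coef_succ mu n Hmu); pose proof (bessel_coef_neq_0 mu n Hmu).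
    pose proof (pos_INR n); rewrite S_INR.
    replace (bessel_coef mu (S n) / bessel_coef mu n)
      with (- / ((INR n + 1) * (INR n + 1 + mu))) by (field_simplify_eq; nra).
    rewrite Rabs_Ropp, Rabs_right
      by (left; apply Rinv_0_lt_compat, Rmult_lt_0_compat; lra).
    split; [left; apply Rinv_0_lt_compat, Rmult_lt_0_compat; lra |].
    rewrite <- Rinv_mult; apply Rinv_le_contravar; [apply Rmult_lt_0_compat |]; nra.
  - apply is_lim_seq_const.
  - replace (Finite 0) with (Rbar_mult (/ (1 + mu)) 0) by (simpl; f_equal; ring).
    apply is_lim_seq_scal_l, (is_lim_seq_incr_1 (fun n => / INR n)).
    replace (Finite 0) with (Rbar_inv p_infty) by reflexivity.
    apply is_lim_seq_inv; [apply is_lim_seq_INR | discriminate].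
Qed.

(* [bessel_series_deriv n mu] is the [n]-th derivative of [w |-> sum_k bessel_coef mu k w^k];
   [besselJ mu x] is [(x/2)^mu] times its value at [w = x^2/4]. *)
Definition bessel_series_deriv (n : nat) (mu w : R) : R :=
  PSeries (Nat.iter n PS_derive (bessel_coef mu)) w.

Lemma CV_radius_bessel_series_deriv (n : nat) (mu : R) : -1 < mu ->
  CV_radius (Nat.iter n PS_derive (bessel_coef mu)) = p_infty.
Proof.
  intros Hmu; induction n as [| n IH]; simpl.
  - apply CV_radius_bessel_coef, Hmu.
  - rewrite CV_radius_derive; exact IH.
Qed.

Lemma ex_pseries_bessel_series_deriv (n : nat) (mu w : R) : -1 < mu ->
  ex_pseries (Nat.iter n PS_derive (bessel_coef mu)) w.
Proof.
  intros Hmu; apply CV_radius_inside; rewrite CV_radius_bessel_series_deriv by exact Hmu.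
  exact I.
Qed.

Lemma is_derive_bessel_series_deriv (n : nat) (mu w : R) : -1 < mu ->
  is_derive (bessel_series_deriv n mu) w (bessel_series_deriv (S n) mu w).
Proof.
  intros Hmu; apply is_derive_PSeries; rewrite CV_radius_bessel_series_deriv by exact Hmu.
  exact I.
Qed.

(* Checked coefficientwise with [bessel_coef_succ]. *)
Lemma bessel_series_ode (mu w : R) : -1 < mu ->
  w * bessel_series_deriv 2 mu w + (mu + 1) * bessel_series_deriv 1 mu w
  + bessel_series_deriv 0 mu w = 0.
Proof.
  intros Hmu; unfold bessel_series_deriv.
  set (c := bessel_coef mu); set (d1 := Nat.iter 1 PS_derive c);
    set (d2 := Nat.iter 2 PS_derive c).
  assert (E1 := ex_pseries_bessel_series_deriv 1 mu w Hmu).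
  assert (E2 := ex_pseries_bessel_series_deriv 2 mu w Hmu).
  assert (E0 := ex_pseries_bessel_series_deriv 0 mu w Hmu).
  assert (E2' : ex_pseries (PS_incr_1 d2) w) by (apply ex_pseries_incr_1, E2).
  assert (E1' : ex_pseries (PS_scal (mu + 1) d1) w)
    by (apply ex_pseries_scal; [apply Rmult_comm | exact E1]).
  assert (E21 : ex_pseries (PS_plus (PS_incr_1 d2) (PS_scal (mu + 1) d1)) w)
    by (apply ex_pseries_plus; assumption).
  rewrite <- PSeries_incr_1, <- PSeries_scal, <- PSeries_plus, <- PSeries_plus by assumption.
  rewrite <- (PSeries_const_0 w); apply PSeries_ext; intros [| k];
    unfold PS_plus, PS_scal, PS_incr_1, d1, d2, c; simpl Nat.iter; unfold PS_derive.
  - pose proof (bessel_coef_succ mu 0 Hmu); simpl in *.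
      change (0 + (mu + 1) * (1 * bessel_coef mu 1) + bessel_coef mu 0 = 0); lra.
  - pose proof (bessel_coef_succ mu (S k) Hmu) as Hk; rewrite (S_INR (S k)) in *.
      change (INR (S k) * ((INR (S k) + 1) * bessel_coef mu (S (S k)))
              + (mu + 1) * ((INR (S k) + 1) * bessel_coef mu (S (S k)))
              + bessel_coef mu (S k) = 0).
      rewrite <- (Ropp_involutive (bessel_coef mu (S k))), <- Hk; ring.
Qed.

(** * The Bessel equation in normal form *)

(* [bessel_u mu t = 2^mu sqrt t J_mu(t)] (lemma [besselJ_eq]) solves [u'' + q u = 0]. *)
Definition bessel_u (mu t : R) : R := Rpower t (1/2 + mu) * bessel_series_deriv 0 mu (t ^ 2 / 4).

Definition bessel_du (mu t : R) : R :=
  (1/2 + mu) * Rpower t (mu - 1/2) * bessel_series_deriv 0 mu (t ^ 2 / 4)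
  + Rpower t (1/2 + mu) * (t / 2) * bessel_series_deriv 1 mu (t ^ 2 / 4).

Definition bessel_q (mu t : R) : R := 1 + (1/4 - mu ^ 2) / t ^ 2.

Lemma Rpower_minus_1 (t y : R) : 0 < t -> Rpower t (y - 1) = Rpower t y / t.
Proof.
  intros Ht; unfold Rminus; rewrite Rpower_plus, Rpower_Ropp, Rpower_1 by exact Ht.
  reflexivity.
Qed.

Lemma is_derive_bessel_u (mu t : R) : -1 < mu -> 0 < t ->
  is_derive (bessel_u mu) t (bessel_du mu t).
Proof.
  intros Hmu Ht; unfold bessel_u, bessel_du.
  pose proof (is_derive_Rpower t (1/2 + mu) Ht).
  pose proof (is_derive_bessel_series_deriv 0 mu (t ^ 2 / 4) Hmu).
  derive_using_hyps.
  change (t * (t * 1) * / 4) with (t ^ 2 / 4).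
  replace (1/2 + mu - 1) with (mu - 1/2) by lra; field.
Qed.

Lemma is_derive_bessel_du (mu t : R) : -1 < mu -> 0 < t ->
  is_derive (bessel_du mu) t (- bessel_q mu t * bessel_u mu t).
Proof.
  intros Hmu Ht; unfold bessel_du, bessel_q, bessel_u.
  pose proof (is_derive_Rpower t (1/2 + mu) Ht).
  pose proof (is_derive_Rpower t (mu - 1/2) Ht).
  pose proof (is_derive_bessel_series_deriv 0 mu (t ^ 2 / 4) Hmu).
  pose proof (is_derive_bessel_series_deriv 1 mu (t ^ 2 / 4) Hmu).
  pose proof (bessel_series_ode mu (t ^ 2 / 4) Hmu) as Hode.
  derive_using_hyps.
  change (t * (t * 1) * / 4) with (t ^ 2 / 4).
  assert (P1 : Rpower t (mu - 1/2) = Rpower t (1/2 + mu) / t).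
  { rewrite <- Rpower_minus_1 by exact Ht; f_equal; lra. }
  assert (P2 : Rpower t (mu - 1/2 - 1) = Rpower t (1/2 + mu) / t / t).
  { rewrite Rpower_minus_1, P1 by exact Ht; reflexivity. }
  assert (Ht2 : 0 < t ^ 2) by (apply pow_lt, Ht).
  assert (S2 : bessel_series_deriv 2 mu (t ^ 2 / 4) =
    - ((mu + 1) * bessel_series_deriv 1 mu (t ^ 2 / 4) + bessel_series_deriv 0 mu (t ^ 2 / 4))
    / (t ^ 2 / 4)).
  { apply (Rmult_eq_reg_l (t ^ 2 / 4)); [field_simplify; lra | lra]. }
  rewrite P2, P1, S2, Rpower_minus_1 by exact Ht; unfold Rdiv; field; lra.
Qed.


Lemma besselJ_eq (mu x : R) : 0 < x ->
  besselJ mu x = Rpower (/ 2) mu * bessel_u mu x / sqrt x.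
Proof.
  intros Hx; unfold besselJ, bessel_u, bessel_series_deriv; simpl Nat.iter.
  assert (Hsum : Series (fun k => (-1) ^ k / (INR (Factorial.fact k) * Gamma (INR k + mu + 1))
                                  * (x / 2) ^ (2 * k))
                 = PSeries (bessel_coef mu) (x ^ 2 / 4)).
  { apply Series_ext; intros k; unfold bessel_coef; rewrite pow_mult.
    replace ((x / 2) ^ 2) with (x ^ 2 / 4) by field; reflexivity. }
  rewrite Hsum; change (x / 2) with (x * / 2).
  rewrite <- Rpower_mult_distr by lra.
  replace (1 / 2 + mu) with (/ 2 + mu) by field.
  rewrite Rpower_plus, Rpower_sqrt by lra.
  assert (0 < sqrt x) by (apply sqrt_lt_R0, Hx).
  set (S := PSeries (bessel_coef mu) (x ^ 2 / 4)); field; lra.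
Qed.

Lemma bessel_u_neq_0_near_0 (mu : R) : -1 < mu ->
  exists x0, 0 < x0 /\ forall t, 0 < t <= x0 -> bessel_u mu t <> 0.
Proof.
  intros Hmu.
  assert (H0 : bessel_series_deriv 0 mu 0 <> 0).
  { unfold bessel_series_deriv; simpl; rewrite PSeries_0; apply bessel_coef_neq_0, Hmu. }
  assert (Hcont : continuous (bessel_series_deriv 0 mu) 0).
  { apply (ex_derive_continuous (bessel_series_deriv 0 mu)); eexists.
    apply is_derive_bessel_series_deriv, Hmu. }
  assert (Habs : 0 < Rabs (bessel_series_deriv 0 mu 0)) by (apply Rabs_pos_lt, H0).
  destruct (proj1 (filterlim_locally _ _) Hcont (mkposreal _ Habs)) as [d Hd].
  pose proof (cond_pos d).
  exists (Rmin 1 d); split; [apply Rmin_pos; lra |].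
  intros t Ht HU; unfold bessel_u in HU.
  apply Rmult_integral in HU as [HP | HS].
  { pose proof (exp_pos ((1/2 + mu) * ln t)); unfold Rpower in HP; lra. }
  assert (Ht1 : t <= 1) by (pose proof (Rmin_l 1 d); lra).
  assert (Htd : t <= d) by (pose proof (Rmin_r 1 d); lra).
  assert (Hball : ball 0 d (t ^ 2 / 4)).
  { change (Rabs (t ^ 2 / 4 - 0) < d); rewrite Rminus_0_r, Rabs_right; simpl; nra. }
  specialize (Hd _ Hball); rewrite HS in Hd.
  change (Rabs (0 - bessel_series_deriv 0 mu 0) < Rabs (bessel_series_deriv 0 mu 0)) in Hd.
  rewrite Rminus_0_l, Rabs_Ropp in Hd; lra.
Qed.

Lemma is_derive_bessel_q (mu t : R) : 0 < t ->
  is_derive (bessel_q mu) t (- 2 * (1/4 - mu ^ 2) / t ^ 3).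
Proof.
  intros Ht; unfold bessel_q; auto_derive.
  - apply Rmult_integral_contrapositive_currified; lra.
  - unfold Rdiv; field; lra.
Qed.

Lemma bessel_q_ge_1 (mu t : R) : mu ^ 2 <= 1/4 -> 0 < t -> 1 <= bessel_q mu t.
Proof.
  intros Hmu Ht; unfold bessel_q.
  assert (0 <= (1/4 - mu ^ 2) / t ^ 2) by (apply Rdiv_le_0_compat; [lra | apply pow_lt, Ht]).
  lra.
Qed.

Lemma bessel_q_le_2 (mu t : R) : mu ^ 2 <= 1/4 -> 1/2 <= t -> bessel_q mu t <= 2.
Proof.
  intros Hmu Ht; unfold bessel_q.
  assert (1/4 <= t ^ 2) by nra.
  assert ((1/4 - mu ^ 2) / t ^ 2 <= 1).
  { apply Rmult_le_reg_r with (t ^ 2); [lra |].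
    unfold Rdiv; rewrite Rmult_assoc, Rinv_l by lra; nra. }
  lra.
Qed.

(** * Zeros of solutions of [y'' + q y = 0] with [q >= 1] nonincreasing *)

Definition pos_zero (f : R -> R) (z : R) : Prop := 0 < z /\ f z = 0.

Record oscillatory_ode (y dy q dq : R -> R) : Prop := {
  ode_y_deriv : forall t, 0 < t -> is_derive y t (dy t);
  ode_dy_deriv : forall t, 0 < t -> is_derive dy t (- q t * y t);
  ode_q_deriv : forall t, 0 < t -> is_derive q t (dq t);
  ode_dq_nonpos : forall t, 0 < t -> dq t <= 0;
  ode_q_ge_1 : forall t, 0 < t -> 1 <= q t;
  ode_y_neq_0_near_0 : exists x0, 0 < x0 /\ forall t, 0 < t <= x0 -> y t <> 0 }.

Arguments ode_y_deriv {y dy q dq}.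
Arguments ode_dy_deriv {y dy q dq}.
Arguments ode_q_deriv {y dy q dq}.
Arguments ode_dq_nonpos {y dy q dq}.
Arguments ode_q_ge_1 {y dy q dq}.
Arguments ode_y_neq_0_near_0 {y dy q dq}.

Section Oscillation.

Variables (y dy q dq : R -> R).
Hypothesis Hode : oscillatory_ode y dy q dq.

Lemma ode_derivs (t : R) : 0 < t ->
  is_derive y t (dy t) /\ is_derive dy t (- q t * y t) /\ is_derive q t (dq t).
Proof.
  intros Ht; split; [| split];
    [apply (ode_y_deriv Hode) | apply (ode_dy_deriv Hode) | apply (ode_q_deriv Hode)]; exact Ht.
Qed.

Lemma continuous_ode_y (t : R) : 0 < t -> continuous y t.
Proof. intros Ht; apply (ex_derive_continuous y); eexists; apply (ode_y_deriv Hode), Ht. Qed.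

Lemma continuous_ode_dy (t : R) : 0 < t -> continuous dy t.
Proof. intros Ht; apply (ex_derive_continuous dy); eexists; apply (ode_dy_deriv Hode), Ht. Qed.

Lemma ode_q_nonincreasing (s t : R) : 0 < s <= t -> q t <= q s.
Proof.
  intros Hst; apply (le_of_derive_nonpos q dq); [lra | |];
    intros u Hu; [apply (ode_q_deriv Hode) | apply (ode_dq_nonpos Hode)]; lra.
Qed.

(* The energy [y'^2 + q y^2] has derivative [q' y^2 <= 0]. *)
Lemma ode_energy_nonincreasing (s t : R) : 0 < s <= t ->
  dy t ^ 2 + q t * y t ^ 2 <= dy s ^ 2 + q s * y s ^ 2.
Proof.
  intros Hst.
  apply (le_of_derive_nonpos (fun u => dy u ^ 2 + q u * y u ^ 2) (fun u => dq u * y u ^ 2));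
    [lra | |].
  - intros u Hu; destruct (ode_derivs u ltac:(lra)) as (Hy & Hdy & Hq).
    derive_using_hyps; ring.
  - intros u Hu; pose proof (ode_dq_nonpos Hode u ltac:(lra)); pose proof (pow2_ge_0 (y u)).
    nra.
Qed.

(* The modified energy [y'^2 / q + y^2] has derivative [- q' y'^2 / q^2 >= 0]. *)
Lemma ode_energy_div_q_nondecreasing (s t : R) : 0 < s <= t ->
  dy s ^ 2 / q s + y s ^ 2 <= dy t ^ 2 / q t + y t ^ 2.
Proof.
  intros Hst.
  apply (le_of_derive_nonneg (fun u => dy u ^ 2 / q u + y u ^ 2)
           (fun u => - dq u * dy u ^ 2 / q u ^ 2)); [lra | |].
  - intros u Hu; pose proof (ode_q_ge_1 Hode u ltac:(lra)).
    destruct (ode_derivs u ltac:(lra)) as (Hy & Hdy & Hq).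
    derive_using_hyps; [lra | unfold Rdiv; field; lra].
  - intros u Hu; pose proof (ode_dq_nonpos Hode u ltac:(lra)).
    pose proof (ode_q_ge_1 Hode u ltac:(lra)).
    apply Rdiv_le_0_compat; [| apply pow_lt; lra].
    pose proof (pow2_ge_0 (dy u)); nra.
Qed.

Lemma ode_zero_simple (z : R) : pos_zero y z -> dy z <> 0.
Proof.
  intros [Hz Hyz] Hdyz; destruct (ode_y_neq_0_near_0 Hode) as [x0 [Hx0 Hnz]].
  set (t := Rmin x0 z).
  assert (Ht : 0 < t <= z) by (split; [apply Rmin_pos | apply Rmin_r]; lra).
  pose proof (ode_energy_div_q_nondecreasing t z Ht) as HF; rewrite Hyz, Hdyz in HF.
  pose proof (ode_q_ge_1 Hode t ltac:(lra)).
  assert (0 <= dy t ^ 2 / q t) by (apply Rdiv_le_0_compat; [apply pow2_ge_0 | lra]).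
  assert (y t ^ 2 <= 0) by (simpl in HF; unfold Rdiv in HF; lra).
  apply (Hnz t); [split; [lra | apply Rmin_l] | nra].
Qed.

(* Between two zeros, [y'] vanishes somewhere (Rolle); two mean value estimates then bound
   [y] and [y'] by the length of the interval. *)
Lemma ode_abs_le_between_zeros (x0 z1 z2 M t : R) : 0 < x0 <= z1 -> z1 < z2 ->
  y z1 = 0 -> y z2 = 0 -> (forall u, z1 <= u <= z2 -> Rabs (y u) <= M /\ Rabs (dy u) <= M) ->
  z1 <= t <= z2 -> Rabs (y t) + Rabs (dy t) <= (1 + q x0) * M * (z2 - z1).
Proof.
  intros Hx0 Hz Hy1 Hy2 HM Ht.
  assert (Hin : forall a b c, z1 <= a <= z2 -> z1 <= b <= z2 -> Rmin a b <= c <= Rmax a b ->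
                  z1 <= c <= z2) by (intros a b c; unfold Rmin, Rmax; destruct Rle_dec; lra).
  destruct (MVT_is_derive y dy z1 z2) as [xi [Hxi Exi]].
  { intros u Hu; apply (ode_y_deriv Hode); pose proof (Hin z1 z2 u ltac:(lra) ltac:(lra) Hu); lra. }
  rewrite Hy1, Hy2 in Exi; rewrite Rmin_left, Rmax_right in Hxi by lra.
  assert (Hdxi : dy xi = 0) by (apply (Rmult_eq_reg_r (z2 - z1)); lra).
  destruct (MVT_is_derive y dy z1 t) as [c1 [Hc1 E1]].
  { intros u Hu; apply (ode_y_deriv Hode); pose proof (Hin z1 t u ltac:(lra) Ht Hu); lra. }
  destruct (MVT_is_derive dy (fun u => - q u * y u) xi t) as [c2 [Hc2 E2]].
  { intros u Hu; apply (ode_dy_deriv Hode); pose proof (Hin xi t u Hxi Ht Hu); lra. }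
  pose proof (Hin z1 t c1 ltac:(lra) Ht Hc1); pose proof (Hin xi t c2 Hxi Ht Hc2).
  rewrite Hy1 in E1; rewrite Hdxi in E2.
  assert (Hyt : Rabs (y t) <= M * (z2 - z1)).
  { replace (y t) with (dy c1 * (t - z1)) by lra; rewrite Rabs_mult, (Rabs_right (t - z1)) by lra.
    apply Rmult_le_compat; [apply Rabs_pos | lra | apply HM; lra | lra]. }
  assert (Hqc2 : 1 <= q c2 <= q x0)
    by (split; [apply (ode_q_ge_1 Hode) | apply ode_q_nonincreasing]; lra).
  assert (Hdyt : Rabs (dy t) <= q x0 * M * (z2 - z1)).
  { replace (dy t) with (- q c2 * y c2 * (t - xi)) by lra.
    rewrite !Rabs_mult, Rabs_Ropp, (Rabs_right (q c2)) by lra.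
    apply Rmult_le_compat; try apply Rabs_pos.
    - apply Rmult_le_pos; [lra | apply Rabs_pos].
    - apply Rmult_le_compat; try lra; [apply Rabs_pos | apply HM; lra].
    - apply Rabs_le; lra. }
  lra.
Qed.

Lemma ode_zero_gap (x0 z1 z2 : R) : 0 < x0 -> (forall t, 0 < t <= x0 -> y t <> 0) ->
  0 < z1 < z2 -> y z1 = 0 -> y z2 = 0 -> 1 / (1 + q x0) <= z2 - z1.
Proof.
  intros Hx0 Hnz Hz Hy1 Hy2.
  assert (Hz1 : x0 < z1)
    by (destruct (Rle_lt_dec z1 x0); [exfalso; apply (Hnz z1); [lra | exact Hy1] | assumption]).
  pose proof (ode_q_ge_1 Hode x0 Hx0).
  set (g := fun t => Rabs (y t) + Rabs (dy t)).
  destruct (continuity_ab_maj g z1 z2) as [m [Hmax Hm]]; [lra | |].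
  { intros t Ht; apply continuity_pt_filterlim.
    apply (continuous_plus (V := R_NormedModule) (fun t => Rabs (y t)) (fun t => Rabs (dy t)));
      apply continuous_comp, continuous_Rabs; [apply continuous_ode_y | apply continuous_ode_dy];
      lra. }
  assert (HM : 0 < g m).
  { pose proof (Hmax z1 ltac:(lra)); pose proof (Rabs_pos (y z1)).
    pose proof (Rabs_pos_lt _ (ode_zero_simple z1 (conj (proj1 Hz) Hy1))).
    unfold g in *; lra. }
  pose proof (ode_abs_le_between_zeros x0 z1 z2 (g m) m ltac:(lra) ltac:(lra) Hy1 Hy2
    ltac:(intros u Hu; pose proof (Hmax u Hu); pose proof (Rabs_pos (y u));
          pose proof (Rabs_pos (dy u)); unfold g in *; lra) Hm).
  assert (1 <= (1 + q x0) * (z2 - z1))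
    by (apply (Rmult_le_reg_r (g m)); [lra |]; unfold g at 1; nra).
  apply (Rmult_le_reg_l (1 + q x0)); [lra |].
  replace ((1 + q x0) * (1 / (1 + q x0))) with 1 by (field; lra); lra.
Qed.

Lemma ode_zeros_separated : exists x0 d, 0 < x0 /\ 0 < d /\
  (forall z, pos_zero y z -> x0 < z) /\
  (forall z1 z2, pos_zero y z1 -> pos_zero y z2 -> z1 < z2 -> d <= z2 - z1).
Proof.
  destruct (ode_y_neq_0_near_0 Hode) as [x0 [Hx0 Hnz]].
  pose proof (ode_q_ge_1 Hode x0 Hx0).
  exists x0, (1 / (1 + q x0)); repeat split; [lra | apply Rdiv_lt_0_compat; lra | |].
  - intros z [Hz Hyz]; destruct (Rle_lt_dec z x0); [exfalso; apply (Hnz z) | ]; auto; lra.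
  - intros z1 z2 [Hz1 Hy1] [Hz2 Hy2] H12; apply (ode_zero_gap x0); auto; lra.
Qed.

(* Sturm comparison with [sin (t - t0)], a solution of [y'' + y = 0]: the Wronskian-type
   quantity [y(t0) (y' sin - y cos)] would be nonincreasing on [[t0, t0 + PI]] while
   ending above where it starts. *)
Lemma ode_zero_in_interval (t0 : R) : 0 < t0 -> exists z, t0 <= z <= t0 + PI /\ y z = 0.
Proof.
  intros Ht0; apply NNPP; intros Hno.
  assert (Hnz : forall t, t0 <= t <= t0 + PI -> y t <> 0)
    by (intros t Ht Hyt; apply Hno; exists t; auto).
  pose proof PI_RGT_0.
  assert (Hsign : forall t, t0 <= t <= t0 + PI -> 0 < y t0 * y t).
  { apply continuous_nonzero_same_sign; [intros; apply continuous_ode_y; lra | exact Hnz]. }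
  set (W := fun t => y t0 * (dy t * sin (t - t0) - y t * cos (t - t0))).
  assert (HW : W (t0 + PI) <= W t0).
  { apply (le_of_derive_nonpos W (fun t => (1 - q t) * (y t0 * y t) * sin (t - t0))); [lra | |].
    - intros t Ht; unfold W.
      pose proof (ode_y_deriv Hode t ltac:(lra)); pose proof (ode_dy_deriv Hode t ltac:(lra)).
      derive_using_hyps; unfold Rminus; ring.
    - intros t Ht; pose proof (Hsign t Ht); pose proof (ode_q_ge_1 Hode t ltac:(lra)).
      assert (0 <= sin (t - t0)) by (apply sin_ge_0; lra).
      assert (0 <= (q t - 1) * (y t0 * y t)) by (apply Rmult_le_pos; lra).
      nra. }
  unfold W in HW; replace (t0 + PI - t0) with PI in HW by ring.
  rewrite Rminus_diag, sin_PI, cos_PI, sin_0, cos_0 in HW.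
  pose proof (Hsign t0 ltac:(lra)); pose proof (Hsign (t0 + PI) ltac:(lra)); nra.
Qed.

(* The infimum of the zeros beyond [s] is attained since zeros are uniformly separated. *)
Lemma ode_next_zero (s : R) : 0 <= s ->
  exists z, pos_zero y z /\ s < z /\ forall w, pos_zero y w -> s < w -> z <= w.
Proof.
  intros Hs; destruct ode_zeros_separated as [x0 [d [Hx0 [Hd [_ Hsep]]]]].
  set (B := fun v => exists w, pos_zero y w /\ s < w /\ v = - w).
  destruct (completeness B) as [L [HLub HLleast]].
  - exists (- s); intros v [w [_ [Hw ->]]]; lra.
  - destruct (ode_zero_in_interval (s + 1)) as [z [Hz Hyz]]; [lra |].
    exists (- z), z; repeat split; auto; lra.
  - assert (Hlow : forall w, pos_zero y w -> s < w -> - L <= w).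
    { intros w Hw Hsw; enough (- w <= L) by lra; apply HLub; exists w; auto. }
    assert (Hex : exists w, pos_zero y w /\ s < w /\ w < - L + d / 2).
    { apply NNPP; intros Hn; enough (L <= L - d / 2) by lra.
      apply HLleast; intros v [w [Hw [Hsw ->]]].
      destruct (Rlt_le_dec w (- L + d / 2)); [exfalso; apply Hn; exists w; auto | lra]. }
    destruct Hex as [w [Hw [Hsw Hwl]]]; exists w; split; [exact Hw | split; [exact Hsw |]].
    intros w' Hw' Hsw'; destruct (Rle_lt_dec w w') as [| Hlt]; [assumption | exfalso].
    pose proof (Hsep w' w Hw' Hw Hlt); pose proof (Hlow w' Hw' Hsw'); lra.
Qed.

Lemma ode_nth_zero (n : nat) : exists j l, pos_zero y j /\ NoDup l /\ length l = n /\
  forall x, In x l <-> (0 < x < j /\ y x = 0).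
Proof.
  induction n as [| n [j [l [Hj [Hnd [Hlen Hin]]]]]].
  - destruct (ode_next_zero 0) as [z [Hz [_ Hmin]]]; [lra |].
    exists z, nil; split; [exact Hz | split; [constructor | split; [reflexivity |]]].
    intros x; split; [intros [] | intros [Hx Hyx]].
    pose proof (Hmin x (conj (proj1 Hx) Hyx) (proj1 Hx)); lra.
  - destruct (ode_next_zero j) as [z [Hz [Hjz Hmin]]]; [destruct Hj; lra |].
    exists z, (j :: l); split; [exact Hz | split; [| split; [simpl; lia |]]].
    + constructor; [intros Hjl; apply Hin in Hjl; lra | exact Hnd].
    + intros x; simpl; split.
      * intros [<- | Hx]; [destruct Hj; split; [lra | assumption] |].
        apply Hin in Hx; split; [lra | apply Hx].
      * intros [Hx Hyx]; destruct (Rtotal_order x j) as [Hl | [He | Hg]].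
        -- right; apply Hin; split; [lra | exact Hyx].
        -- left; symmetry; exact He.
        -- pose proof (Hmin x (conj (proj1 Hx) Hyx) Hg); lra.
Qed.

Lemma ode_RInt_sq_pos (s1 s2 : R) : 0 < s1 < s2 -> 0 < RInt (fun t => y t ^ 2) s1 s2.
Proof.
  intros Hs; destruct ode_zeros_separated as [x0 [d [Hx0 [Hd [_ Hsep]]]]].
  assert (Hc : exists c, s1 <= c <= s2 /\ y c <> 0).
  { destruct (Req_dec (y s1) 0) as [H0 | H0]; [| exists s1; split; [lra | exact H0]].
    set (c := s1 + Rmin (s2 - s1) d / 2).
    pose proof (Rmin_l (s2 - s1) d); pose proof (Rmin_r (s2 - s1) d).
    assert (0 < Rmin (s2 - s1) d) by (apply Rmin_pos; lra).
    assert (Hc : s1 < c < s1 + d) by (unfold c; lra).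
    exists c; split; [unfold c; lra | intros Hyc].
    assert (Hz1 : pos_zero y s1) by (split; [lra | exact H0]).
    assert (Hzc : pos_zero y c) by (split; [lra | exact Hyc]).
    pose proof (Hsep s1 c Hz1 Hzc ltac:(lra)); lra. }
  destruct Hc as [c [Hc Hyc]].
  apply (RInt_gt_0 _ s1 s2 c); [lra | | intros; apply pow2_ge_0 | lra | apply pow2_gt_0, Hyc].
  intros t Ht; destruct (ode_derivs t ltac:(lra)) as (Hy & Hdy & Hq).
  continuity_using_hyps.
Qed.

Lemma ode_bounds_before_zero (j t : R) : pos_zero y j -> 0 < t <= j -> q t <= 2 ->
  dy j ^ 2 <= dy t ^ 2 + q t * y t ^ 2 /\ y t ^ 2 <= dy j ^ 2 /\ dy t ^ 2 <= 2 * dy j ^ 2.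
Proof.
  intros [Hj Hyj] Ht Hq2.
  pose proof (ode_energy_nonincreasing t j Ht) as HE.
  pose proof (ode_energy_div_q_nondecreasing t j Ht) as HF.
  rewrite Hyj in HE, HF; simpl in HE, HF.
  pose proof (ode_q_ge_1 Hode t ltac:(lra)); pose proof (ode_q_ge_1 Hode j Hj).
  assert (dy j * (dy j * 1) / q j <= dy j * (dy j * 1)).
  { apply Rmult_le_reg_r with (q j); [lra |]; unfold Rdiv; rewrite Rmult_assoc, Rinv_l by lra.
    pose proof (pow2_ge_0 (dy j)); simpl in *; nra. }
  assert (0 <= dy t * (dy t * 1) / q t)
    by (apply Rdiv_le_0_compat; [pose proof (pow2_ge_0 (dy t)); simpl in *; lra | lra]).
  assert (dy t * (dy t * 1) = q t * (dy t * (dy t * 1) / q t)) by (field; lra).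
  simpl; split; [lra | split; [lra | nra]].
Qed.

(* [(y y')' = y'^2 - q y^2]. *)
Lemma ode_RInt_energy_identity (s1 s2 : R) : 0 < s1 <= s2 ->
  RInt (fun t => dy t ^ 2 - q t * y t ^ 2) s1 s2 = y s2 * dy s2 - y s1 * dy s1.
Proof.
  intros Hs; apply is_RInt_unique, (is_RInt_derive (fun t => y t * dy t));
    intros t Ht; rewrite Rmin_left in Ht by lra;
    destruct (ode_derivs t ltac:(lra)) as (Hy & Hdy & Hq).
  - derive_using_hyps; ring.
  - continuity_using_hyps.
Qed.

Local Ltac ode_continuity :=
  let t := fresh "t" in let Ht := fresh "Ht" in
  intros t Ht; destruct (ode_derivs t Ht) as (? & ? & ?); continuity_using_hyps.

Lemma ode_RInt_sq_ge (j s1 s2 : R) : pos_zero y j -> 0 < s1 -> s1 + 6 <= s2 -> s2 <= j ->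
  (forall t, s1 <= t <= s2 -> q t <= 2) ->
  (s2 - s1) * dy j ^ 2 / 8 <= RInt (fun t => y t ^ 2) s1 s2.
Proof.
  intros Hj Hs1 Hs12 Hs2j Hq2; set (D := dy j ^ 2).
  assert (Hex : forall f : R -> R, (forall t, 0 < t -> continuous f t) -> ex_RInt f s1 s2).
  { intros f Hf; apply (ex_RInt_continuous f); intros t Ht; apply Hf.
    rewrite Rmin_left in Ht by lra; lra. }
  assert (Hbd : forall t, s1 <= t <= s2 ->
            D <= dy t ^ 2 + q t * y t ^ 2 /\ y t ^ 2 <= D /\ dy t ^ 2 <= 2 * D).
  { intros t Ht; apply ode_bounds_before_zero; [exact Hj | lra | apply Hq2, Ht]. }
  assert (HI1 : (s2 - s1) * D <= RInt (fun t => dy t ^ 2 + q t * y t ^ 2) s1 s2).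
  { rewrite <- (RInt_const (V := R_CompleteNormedModule)).
    apply RInt_le; [lra | apply ex_RInt_const | apply Hex; ode_continuity |].
    intros t Ht; apply (Hbd t); lra. }
  assert (HI2 : RInt (fun t => dy t ^ 2 + q t * y t ^ 2) s1 s2
                = RInt (fun t => dy t ^ 2 - q t * y t ^ 2) s1 s2
                  + 2 * RInt (fun t => q t * y t ^ 2) s1 s2).
  { rewrite <- RInt_scal_R, <- RInt_plus_R by (apply Hex; ode_continuity).
    apply RInt_ext_R; intros; ring. }
  assert (HI3 : RInt (fun t => q t * y t ^ 2) s1 s2 <= 2 * RInt (fun t => y t ^ 2) s1 s2).
  { rewrite <- RInt_scal_R by (apply Hex; ode_continuity).
    apply RInt_le; [lra | apply Hex; ode_continuity
                   | apply Hex; ode_continuity |].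
    intros t Ht; pose proof (Hq2 t ltac:(lra)); pose proof (pow2_ge_0 (y t)); nra. }
  assert (Hyy : forall t, s1 <= t <= s2 -> Rabs (y t * dy t) <= 3 * D / 2).
  { intros t Ht; destruct (Hbd t Ht) as (_ & Hy2 & Hdy2); fold D in Hy2, Hdy2.
    pose proof (pow2_ge_0 (y t - dy t)); pose proof (pow2_ge_0 (y t + dy t)).
    apply Rabs_le; simpl in *; split; nra. }
  rewrite ode_RInt_energy_identity in HI2 by lra.
  assert (Hb1 : Rabs (y s1 * dy s1) <= 3 * D / 2) by (apply Hyy; lra).
  assert (Hb2 : Rabs (y s2 * dy s2) <= 3 * D / 2) by (apply Hyy; lra).
  apply Rabs_le_between in Hb1, Hb2.
  assert (HD : 0 <= D) by apply pow2_ge_0.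
  nra.
Qed.
End Oscillation.

(** * Zeros of the Bessel functions *)

Lemma bessel_oscillatory_ode (mu : R) : mu ^ 2 <= 1/4 ->
  oscillatory_ode (bessel_u mu) (bessel_du mu) (bessel_q mu)
    (fun t => - 2 * (1/4 - mu ^ 2) / t ^ 3).
Proof.
  intros Hmu; assert (Hmu1 : -1 < mu) by nra; split.
  - intros t Ht; apply is_derive_bessel_u; assumption.
  - intros t Ht; apply is_derive_bessel_du; assumption.
  - intros t Ht; apply is_derive_bessel_q, Ht.
  - intros t Ht; assert (0 < t ^ 3) by (apply pow_lt, Ht).
    assert (0 <= 2 * (1/4 - mu ^ 2) / t ^ 3) by (apply Rdiv_le_0_compat; lra).
    unfold Rdiv in *; lra.
  - intros t Ht; apply bessel_q_ge_1; assumption.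
  - apply bessel_u_neq_0_near_0, Hmu1.
Qed.

Lemma besselJ_eq_0 (mu x : R) : 0 < x -> besselJ mu x = 0 <-> bessel_u mu x = 0.
Proof.
  intros Hx; rewrite besselJ_eq by exact Hx.
  assert (HK : 0 < Rpower (/ 2) mu) by apply exp_pos.
  assert (Hs : 0 < sqrt x) by (apply sqrt_lt_R0, Hx).
  split; intros Hu; [| rewrite Hu; unfold Rdiv; ring].
  replace (bessel_u mu x) with (Rpower (/ 2) mu * bessel_u mu x / sqrt x * sqrt x / Rpower (/ 2) mu)
    by (field; lra).
  rewrite Hu; unfold Rdiv; ring.
Qed.

Lemma bessel_zero_spec (mu : R) (n : nat) : mu ^ 2 <= 1/4 ->
  is_nth_pos_zero mu n (bessel_zero mu n).
Proof.
  intros Hmu; unfold bessel_zero; apply epsilon_spec.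
  destruct (ode_nth_zero _ _ _ _ (bessel_oscillatory_ode mu Hmu) (n - 1))
    as [j [l [[Hj Hu] [Hnd [Hlen Hin]]]]].
  exists j; split; [exact Hj | split; [apply besselJ_eq_0; assumption |]].
  exists l; split; [exact Hnd | split; [exact Hlen |]].
  intros x; rewrite Hin; split; intros [Hx H0]; split; try exact Hx;
    apply besselJ_eq_0; lra || assumption.
Qed.

Lemma bessel_zero_pos_zero (mu : R) (n : nat) : mu ^ 2 <= 1/4 ->
  pos_zero (bessel_u mu) (bessel_zero mu n).
Proof.
  intros Hmu; destruct (bessel_zero_spec mu n Hmu) as [Hj [HJ _]].
  split; [exact Hj | apply besselJ_eq_0; assumption].
Qed.

(* The [n - 1] smaller zeros together with [bessel_zero mu n] are [d]-separated points of
   [(x0, bessel_zero mu n]]. *)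
Lemma bessel_zero_unbounded (mu : R) (J : R) : mu ^ 2 <= 1/4 ->
  exists N, forall n, (N <= n)%nat -> J < bessel_zero mu n.
Proof.
  intros Hmu; set (Hode := bessel_oscillatory_ode mu Hmu).
  destruct (ode_zeros_separated _ _ _ _ Hode) as [x0 [d [Hx0 [Hd [Hgt Hsep]]]]].
  destruct (INR_unbounded ((J - x0) / d + 2)) as [N HN].
  exists N; intros n Hn.
  destruct (bessel_zero_spec mu n Hmu) as [Hj [HJ [l [Hnd [Hlen Hin]]]]].
  set (j := bessel_zero mu n) in *.
  assert (Hzl : forall x, In x (j :: l) -> pos_zero (bessel_u mu) x /\ x <= j).
  { intros x [<- | Hx]; [split; [apply bessel_zero_pos_zero, Hmu | lra] |].
    apply Hin in Hx as [Hx HJx]; split; [split; [lra | apply besselJ_eq_0; lra] | lra]. }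
  pose proof (separated_points_count d x0 j (j :: l) Hd ltac:(discriminate)
    ltac:(constructor; [intros Hjl; apply Hin in Hjl; lra | exact Hnd])
    ltac:(intros x Hx; destruct (Hzl x Hx) as [Hz Hxj]; pose proof (Hgt x Hz); lra)
    ltac:(intros x y Hx Hy Hxy; apply Hsep; [apply Hzl, Hx | apply Hzl, Hy | exact Hxy])).
  change (length (j :: l)) with (S (length l)) in H; rewrite Hlen in H.
  assert (INR n <= INR (S (n - 1))) by (apply le_INR; lia).
  assert (INR N <= INR n) by (apply le_INR, Hn).
  assert (J - x0 + 2 * d < INR n * d).
  { replace (J - x0 + 2 * d) with (((J - x0) / d + 2) * d) by (field; lra).
    apply Rlt_le_trans with (INR N * d); [apply Rmult_lt_compat_r | apply Rmult_le_compat_r]; lra. }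
  nra.
Qed.

Lemma is_derive_besselJ_pos_zero (mu j : R) : -1 < mu -> pos_zero (bessel_u mu) j ->
  is_derive (besselJ mu) j (Rpower (/ 2) mu * bessel_du mu j / sqrt j).
Proof.
  intros Hmu [Hj Hu].
  apply (is_derive_ext_loc (fun x => Rpower (/ 2) mu * bessel_u mu x / sqrt x)).
  - exists (mkposreal j Hj); intros x Hx; change (Rabs (x - j) < j) in Hx.
    apply Rabs_lt_between in Hx; symmetry; apply besselJ_eq; lra.
  - pose proof (is_derive_bessel_u mu j Hmu Hj); pose proof (sqrt_lt_R0 j Hj).
    derive_using_hyps; [lra | lra | rewrite Hu; field; lra].
Qed.

(* [int_a^b tPhi^2] in the variable [t = j x^kappa], with [A = a^kappa] and [B = b^kappa]. *)
Definition bessel_mass (mu A B j : R) : R :=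
  RInt (fun t => bessel_u mu t ^ 2) (j * A) (j * B) / (j * bessel_du mu j ^ 2).

Lemma normalized_bessel_sq_eq (alpha mu j x : R) : alpha < 2 -> 0 < j ->
  bessel_du mu j <> 0 -> 0 < x ->
  (sqrt (kappa_ alpha) / Rabs (Rpower (/ 2) mu * bessel_du mu j / sqrt j)
   * (Rpower x ((1 - alpha) / 2) * besselJ mu (j * Rpower x (kappa_ alpha)))) ^ 2
  = / (j * bessel_du mu j ^ 2)
    * (j * (kappa_ alpha * Rpower x (kappa_ alpha - 1))
       * bessel_u mu (j * Rpower x (kappa_ alpha)) ^ 2).
Proof.
  intros Halpha Hj Hdu Hx; set (k := kappa_ alpha).
  assert (Hk : 0 < k) by (unfold k, kappa_; lra).
  set (K := Rpower (/ 2) mu); assert (HK : 0 < K) by apply exp_pos.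
  assert (Hxk : 0 < Rpower x k) by apply exp_pos.
  assert (Hy : 0 < j * Rpower x k) by (apply Rmult_lt_0_compat; lra).
  rewrite besselJ_eq by exact Hy; fold K.
  assert (Hpow : Rpower x ((1 - alpha) / 2) ^ 2 = Rpower x (k - 1) * Rpower x k).
  { simpl; rewrite Rmult_1_r, <- !Rpower_plus; f_equal; unfold k, kappa_; field. }
  assert (Hsk : sqrt k ^ 2 = k) by (apply pow2_sqrt; lra).
  assert (Hsj : sqrt j ^ 2 = j) by (apply pow2_sqrt; lra).
  assert (Hsy : sqrt (j * Rpower x k) ^ 2 = j * Rpower x k) by (apply pow2_sqrt; lra).
  pose proof (sqrt_lt_R0 j Hj); pose proof (sqrt_lt_R0 _ Hy).
  set (Z := K * bessel_du mu j / sqrt j).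
  assert (HZ : Rabs Z <> 0).
  { apply Rabs_no_R0; unfold Z; apply Rmult_integral_contrapositive_currified;
      [apply Rmult_integral_contrapositive_currified; lra | apply Rinv_neq_0_compat; lra]. }
  set (U := bessel_u mu (j * Rpower x k)); set (P := Rpower x ((1 - alpha) / 2)).
  replace ((sqrt k / Rabs Z * (P * (K * U / sqrt (j * Rpower x k)))) ^ 2)
    with (sqrt k ^ 2 / Rabs Z ^ 2 * P ^ 2 * (K ^ 2 * U ^ 2 / sqrt (j * Rpower x k) ^ 2))
    by (field; split; [lra | assumption]).
  rewrite Hsk, pow2_abs, Hsy; unfold P; rewrite Hpow.
  replace (Z ^ 2) with (K ^ 2 * bessel_du mu j ^ 2 / sqrt j ^ 2) by (unfold Z; field; lra).
  rewrite Hsj; field; repeat split; try lra; apply pow_nonzero; lra.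
Qed.

Lemma RInt_normalized_bessel_sq (alpha mu j a b : R) :
  alpha < 2 -> mu ^ 2 <= 1/4 -> pos_zero (bessel_u mu) j -> 0 < a < b ->
  RInt (fun x => (sqrt (kappa_ alpha) / Rabs (Derive (besselJ mu) j)
                  * (Rpower x ((1 - alpha) / 2) * besselJ mu (j * Rpower x (kappa_ alpha)))) ^ 2)
       a b
  = bessel_mass mu (Rpower a (kappa_ alpha)) (Rpower b (kappa_ alpha)) j.
Proof.
  intros Halpha Hmu Hj Hab; set (k := kappa_ alpha).
  assert (Hk : 0 < k) by (unfold k, kappa_; lra).
  assert (Hmu1 : -1 < mu) by nra.
  pose proof (proj1 Hj) as Hj0.
  assert (Hdu : bessel_du mu j <> 0)
    by exact (ode_zero_simple _ _ _ _ (bessel_oscillatory_ode mu Hmu) j Hj).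
  rewrite (is_derive_unique _ _ _ (is_derive_besselJ_pos_zero mu j Hmu1 Hj)).
  set (g := fun x => j * Rpower x k); set (dg := fun x => j * (k * Rpower x (k - 1))).
  rewrite (RInt_ext_R _ (fun x => / (j * bessel_du mu j ^ 2) * (dg x * bessel_u mu (g x) ^ 2)))
    by (intros x Hx; rewrite Rmin_left in Hx by lra; apply normalized_bessel_sq_eq; lra).
  assert (HI : is_RInt (fun x => dg x * bessel_u mu (g x) ^ 2) a b
                 (RInt (fun t => bessel_u mu t ^ 2) (g a) (g b))).
  { apply (is_RInt_comp (fun t => bessel_u mu t ^ 2) g dg); intros x Hx;
      rewrite Rmin_left, Rmax_right in Hx by lra.
    - assert (Hgx : 0 < g x) by (apply Rmult_lt_0_compat; [lra | apply exp_pos]).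
      pose proof (is_derive_bessel_u mu (g x) Hmu1 Hgx); continuity_using_hyps.
    - pose proof (is_derive_Rpower x k ltac:(lra));
        pose proof (is_derive_Rpower x (k - 1) ltac:(lra)).
      unfold g, dg; split; [derive_using_hyps; ring | continuity_using_hyps]. }
  rewrite RInt_scal_R by (eexists; exact HI).
  rewrite (is_RInt_unique _ _ _ _ HI); unfold bessel_mass, Rdiv; apply Rmult_comm.
Qed.

Lemma bessel_mass_pos (mu A B : R) (n : nat) : mu ^ 2 <= 1/4 -> 0 < A < B ->
  0 < bessel_mass mu A B (bessel_zero mu n).
Proof.
  intros Hmu HAB; set (Hode := bessel_oscillatory_ode mu Hmu).
  destruct (bessel_zero_pos_zero mu n Hmu) as [Hj Hu]; set (j := bessel_zero mu n) in *.
  assert (Hdu : 0 < bessel_du mu j ^ 2)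
    by (apply pow2_gt_0, (ode_zero_simple _ _ _ _ Hode); split; assumption).
  apply Rdiv_lt_0_compat; [| apply Rmult_lt_0_compat; lra].
  apply (ode_RInt_sq_pos _ _ _ _ Hode); split; [apply Rmult_lt_0_compat |]; nra.
Qed.

(* It suffices that [j A >= 1/2], so that [bessel_q <= 2] on [[j A, j B]], and
   [j (B - A) >= 6]. *)
Lemma bessel_mass_ge (mu A B : R) : mu ^ 2 <= 1/4 -> 0 < A < B -> B <= 1 ->
  exists N, forall n, (N <= n)%nat -> (B - A) / 8 <= bessel_mass mu A B (bessel_zero mu n).
Proof.
  intros Hmu HAB HB; set (Hode := bessel_oscillatory_ode mu Hmu).
  set (J := Rmax (1 / (2 * A)) (6 / (B - A))).
  destruct (bessel_zero_unbounded mu J Hmu) as [N HN]; exists N; intros n Hn.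
  specialize (HN n Hn); pose proof (bessel_zero_pos_zero mu n Hmu) as Hj.
  set (j := bessel_zero mu n) in *; pose proof (proj1 Hj) as Hj0.
  assert (HjA : 1 / 2 <= j * A).
  { apply Rle_trans with (1 / (2 * A) * A); [right; field; lra |].
    apply Rmult_le_compat_r; [lra |].
    apply Rlt_le, Rle_lt_trans with J; [apply Rmax_l | exact HN]. }
  assert (HjBA : 6 <= (B - A) * j).
  { apply Rle_trans with ((B - A) * (6 / (B - A))); [right; field; lra |].
    apply Rmult_le_compat_l; [lra |].
    apply Rlt_le, Rle_lt_trans with J; [apply Rmax_r | exact HN]. }
  assert (Hdu : 0 < bessel_du mu j ^ 2)
    by exact (pow2_gt_0 _ (ode_zero_simple _ _ _ _ Hode j Hj)).
  pose proof (ode_RInt_sq_ge _ _ _ _ Hode j (j * A) (j * B) Hj ltac:(lra) ltac:(nra) ltac:(nra)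
    (fun t Ht => bessel_q_le_2 mu t Hmu ltac:(lra))) as HI.
  unfold bessel_mass; apply (Rmult_le_reg_r (j * bessel_du mu j ^ 2)); [nra |].
  unfold Rdiv at 2; rewrite Rmult_assoc, Rinv_l, Rmult_1_r by nra.
  replace ((B - A) / 8 * (j * bessel_du mu j ^ 2)) with ((j * B - j * A) * bessel_du mu j ^ 2 / 8)
    by (field; lra).
  exact HI.
Qed.

Lemma nu_sq_le (alpha : R) : 0 <= alpha < 1 -> nu_ alpha ^ 2 <= 1/4.
Proof.
  intros Ha; unfold nu_.
  assert (0 <= (1 - alpha) / (2 - alpha) <= 1/2).
  { split; [apply Rdiv_le_0_compat; lra |].
    apply Rmult_le_reg_r with (2 - alpha); [lra |].
    unfold Rdiv; rewrite Rmult_assoc, Rinv_l by lra; lra. }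
  nra.
Qed.

Lemma RInt_tPhi_sq (alpha a b : R) (m : nat) : 0 <= alpha < 1 -> 0 < a < b ->
  exists mu n, (mu = nu_ alpha \/ mu = - nu_ alpha) /\ (m <= 2 * n)%nat /\
    RInt (fun x => tPhi alpha m x ^ 2) a b
    = bessel_mass mu (Rpower a (kappa_ alpha)) (Rpower b (kappa_ alpha)) (bessel_zero mu n).
Proof.
  intros Ha Hab; pose proof (nu_sq_le alpha Ha) as Hnu; assert (Ha2 : alpha < 2) by lra.
  unfold tPhi; destruct (Nat.odd m) eqn:Hodd.
  - exists (- nu_ alpha), ((m + 1) / 2)%nat; split; [right; reflexivity | split].
    + apply Nat.odd_spec in Hodd as [p ->].
      replace (2 * p + 1 + 1)%nat with ((p + 1) * 2)%nat by lia; rewrite Nat.div_mul; lia.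
    + assert (Hmu : (- nu_ alpha) ^ 2 <= 1/4) by nra.
      rewrite <- (RInt_normalized_bessel_sq alpha _ _ a b Ha2 Hmu
                    (bessel_zero_pos_zero _ _ Hmu) Hab).
      apply RInt_ext_R; intros x Hx; rewrite Rmin_left, Rmax_right in Hx by lra.
      unfold Phi_e; destruct (Req_EM_T x 0); [exfalso; lra |].
      rewrite (Rabs_right x) by lra; reflexivity.
  - exists (nu_ alpha), (m / 2)%nat; split; [left; reflexivity | split].
    + assert (Nat.even m = true) by (rewrite <- Nat.negb_odd, Hodd; reflexivity).
      apply Nat.even_spec in H as [p ->]; rewrite Nat.mul_comm, Nat.div_mul; lia.
    + rewrite <- (RInt_normalized_bessel_sq alpha _ _ a b Ha2 Hnu
                    (bessel_zero_pos_zero _ _ Hnu) Hab).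
      apply RInt_ext_R; intros x Hx; rewrite Rmin_left, Rmax_right in Hx by lra.
      unfold Phi_o; destruct (Rlt_dec 0 x); [reflexivity | exfalso; lra].
Qed.

Lemma finite_lower_bound (f : nat -> R) (N : nat) : (forall m, (1 <= m)%nat -> 0 < f m) ->
  exists d, 0 < d /\ forall m, (1 <= m <= N)%nat -> d <= f m.
Proof.
  intros Hf; induction N as [| N [d [Hd IH]]]; [exists 1; split; [lra | intros; lia] |].
  exists (Rmin d (f (S N))); split; [apply Rmin_pos; [lra | apply Hf; lia] |].
  intros m Hm; destruct (Nat.eq_dec m (S N)) as [-> | Hne]; [apply Rmin_r |].
  apply Rle_trans with d; [apply Rmin_l | apply IH; lia].
Qed.

Theorem lemma7p2 (alpha a b : R) :
  0 <= alpha < 1 -> 0 < a -> a < b -> b < 1 ->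
  exists mu : R, 0 < mu /\
    forall m : nat, (1 <= m)%nat ->
      RInt (fun x => (tPhi alpha m x) ^ 2) a b >= mu.
Proof.
  intros Ha Ha0 Hab Hb1; pose proof (nu_sq_le alpha Ha) as Hnu.
  set (k := kappa_ alpha); assert (Hk : 0 < k) by (unfold k, kappa_; lra).
  set (A := Rpower a k); set (B := Rpower b k).
  assert (HAB : 0 < A < B) by (split; [apply exp_pos | apply Rlt_Rpower_l; lra]).
  assert (HB : B <= 1).
  { unfold B, Rpower; rewrite <- exp_0; apply exp_le_compat.
    assert (ln b < 0) by (rewrite <- ln_1; apply ln_increasing; lra); nra. }
  assert (Hnu' : (- nu_ alpha) ^ 2 <= 1/4) by nra.
  destruct (bessel_mass_ge (nu_ alpha) A B Hnu HAB HB) as [No HNo].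
  destruct (bessel_mass_ge (- nu_ alpha) A B Hnu' HAB HB) as [Ne HNe].
  assert (Hpos : forall m, (1 <= m)%nat -> 0 < RInt (fun x => tPhi alpha m x ^ 2) a b).
  { intros m _; destruct (RInt_tPhi_sq alpha a b m Ha ltac:(lra)) as (mu & n & Hmu & _ & ->).
    apply bessel_mass_pos; [destruct Hmu as [-> | ->]; assumption | exact HAB]. }
  destruct (finite_lower_bound _ (2 * (Ne + No)) Hpos) as [d [Hd Hsmall]].
  exists (Rmin d ((B - A) / 8)); split; [apply Rmin_pos; lra |].
  intros m Hm; apply Rle_ge.
  destruct (Nat.le_gt_cases m (2 * (Ne + No))) as [Hle | Hgt].
  - eapply Rle_trans; [apply Rmin_l | apply Hsmall; lia].
  - eapply Rle_trans; [apply Rmin_r |].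
    destruct (RInt_tPhi_sq alpha a b m Ha ltac:(lra)) as (mu & n & [-> | ->] & Hmn & ->);
      [apply HNo | apply HNe]; lia.
Qed.
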